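(* Let $\mathcal{H}$ be a finite-dimensional complex Hilbert space, let $\ket{\psi_1},\ket{\psi_2}\in\mathcal{H}$ be pure states, and let $\alpha,\beta\in[0,1]$. For every ontological model (as defined in the context) for these two preparations, $$S^{Gam}_Q(\psi_1,\psi_2;\alpha,\beta)\le S^{Gam}_\Lambda(\psi_1,\psi_2;\alpha,\beta)=1-\frac{\omega_\Lambda(\psi_1,\psi_2;\alpha,\beta)}{2},$$ where $S^{Gam}_\Lambda(\psi_1,\psi_2;\alpha,\beta)=\tfrac12\int_\Lambda\max\big(\tilde\mu_1(\lambda),\tilde\mu_2(\lambda),\tilde\mu_3(\lambda)\big)d\lambda-\beta$ and $$\omega_\Lambda(\psi_1,\psi_2;\alpha,\beta)=T_1+T_2+T_3-T_4,$$ with $T_1=\int_\Lambda\min(\tilde\mu_1,\tilde\mu_2)d\lambda$, $T_2=\int_\Lambda\min(\tilde\mu_1,\tilde\mu_3)d\lambda-(\alpha+\beta)$, $T_3=\int_\Lambda\min(\tilde\mu_2,\tilde\mu_3)d\lambda-(\alpha+\beta)$, $T_4=\int_\Lambda\min(\tilde\mu_1,\tilde\mu_2,\tilde\mu_3)d\lambda$, and $\tilde\mu_1(\lambda)=(1+\beta)\mu(\lambda|\psi_1)$, $\tilde\mu_2(\lambda)=(1+\beta)\mu(\lambda|\psi_2)$, $\tilde\mu_3(\lambda)=(\alpha+\beta)\big(\mu(\lambda|\psi_1)+\mu(\lambda|\psi_2)\big)$.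
   Context: For a state $\sigma$ and POVM $\mathcal{M}=\{M_k\}$, $p(k|\sigma,\mathcal{M})=\mathrm{Tr}(\sigma M_k)$. Quantum gambling value: $S^{Gam}_Q(\psi_1,\psi_2;\alpha,\beta)=\tfrac12\max_{\mathcal{M}}\big(p(1|\psi_1,\mathcal{M})-\beta p(2|\psi_1,\mathcal{M})+\alpha p(3|\psi_1,\mathcal{M})+p(2|\psi_2,\mathcal{M})-\beta p(1|\psi_2,\mathcal{M})+\alpha p(3|\psi_2,\mathcal{M})\big)$, the maximum over all three-outcome POVMs $\mathcal{M}=\{M_1,M_2,M_3\}$ on $\mathcal{H}$. Ontological model: a measure space $(\Lambda,d\lambda)$; for each preparation $\psi_j$ ($j=1,2$) a probability density $\mu(\lambda|\psi_j)\ge 0$ with $\int_\Lambda\mu(\lambda|\psi_j)d\lambda=1$; for each $n$-outcome POVM $\mathcal{M}$ response functions $\xi(k|\lambda,\mathcal{M})\ge0$ with $\sum_k\xi(k|\lambda,\mathcal{M})=1$ for all $\lambda$; such that $\bra{\psi_j}M_k\ket{\psi_j}=\int_\Lambda\mu(\lambda|\psi_j)\xi(k|\lambda,\mathcal{M})d\lambda$ for all $j,\mathcal{M},k$. *)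

From HB Require Import structures.
From mathcomp Require Import all_boot all_order all_algebra.
From mathcomp Require Import complex.
From mathcomp Require Import all_classical all_reals all_analysis.
Set Implicit Arguments. Unset Strict Implicit. Unset Printing Implicit Defensive.
Import Order.TTheory GRing.Theory Num.Theory.
Import ComplexField.
Local Open Scope ring_scope.
Local Open Scope classical_set_scope.

Section Defs.
Variable R : realType.
Local Notation C := (R[i]).

Definition adj m n (A : 'M[C]_(m, n)) : 'M[C]_(n, m) := map_mx Num.conj A^T.

Definition qform n (A : 'M[C]_n) (v : 'cV[C]_n) : C := (adj v *m A *m v) 0 0.

Definition unit_vector n (v : 'cV[C]_n) : Prop := (adj v *m v) 0 0 = 1.

Definition psd n (A : 'M[C]_n) : Prop :=
  adj A = A /\ forall v : 'cV[C]_n, 0 <= qform A v.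

Definition is_povm n k (M : 'I_k -> 'M[C]_n) : Prop :=
  (forall i, psd (M i)) /\ \sum_(i < k) M i = 1%:M.

(* p(i | psi, M) = Tr(|psi><psi| M_i) = <psi|M_i|psi> (a real number for a POVM) *)
Definition prob n k (psi : 'cV[C]_n) (M : 'I_k -> 'M[C]_n) (i : 'I_k) : R :=
  complex.Re (qform (M i) psi).

(* quantum gambling value: sup (attained max) over three-outcome POVMs *)
Definition S_Q n (psi1 psi2 : 'cV[C]_n) (alpha beta : R) : R :=
  sup [set r | exists M : 'I_3 -> 'M[C]_n, is_povm M /\
    r = 2^-1 * (prob psi1 M 0 - beta * prob psi1 M 1 + alpha * prob psi1 M 2
              + prob psi2 M 1 - beta * prob psi2 M 0 + alpha * prob psi2 M 2)].

(* ontological model for the two preparations psi1, psi2 on (L, dlambda):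
   densities mu1 = mu(.|psi1), mu2 = mu(.|psi2), response functions xi. *)
Definition ontological_model n (psi1 psi2 : 'cV[C]_n)
  (d : measure_display) (L : measurableType d) (dl : {measure set L -> \bar R})
  (mu1 mu2 : L -> R)
  (xi : forall k, ('I_k -> 'M[C]_n) -> 'I_k -> L -> R) : Prop :=
  [/\ measurable_fun setT mu1 /\ measurable_fun setT mu2,
      (forall l, 0 <= mu1 l) /\ (forall l, 0 <= mu2 l),
      (\int[dl]_l (mu1 l)%:E = 1)%E /\ (\int[dl]_l (mu2 l)%:E = 1)%E &
      forall k (M : 'I_k -> 'M[C]_n), is_povm M ->
        [/\ (forall i, measurable_fun setT (xi k M i)),
            (forall i l, 0 <= xi k M i l),
            (forall l, \sum_(i < k) xi k M i l = 1),
            (forall i, (prob psi1 M i)%:E = \int[dl]_l (mu1 l * xi k M i l)%:E)%E &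
            (forall i, (prob psi2 M i)%:E = \int[dl]_l (mu2 l * xi k M i l)%:E)%E]].

Section Gamble.
Variables (d : measure_display) (L : measurableType d) (dl : {measure set L -> \bar R}).
Variables (mu1 mu2 : L -> R) (alpha beta : R).

Definition mut1 l := (1 + beta) * mu1 l.
Definition mut2 l := (1 + beta) * mu2 l.
Definition mut3 l := (alpha + beta) * (mu1 l + mu2 l).

Definition S_Lam : \bar R :=
  ((2^-1)%:E * \int[dl]_l (Num.max (mut1 l) (Num.max (mut2 l) (mut3 l)))%:E
   - beta%:E)%E.

Definition T1 : \bar R := (\int[dl]_l (Num.min (mut1 l) (mut2 l))%:E)%E.
Definition T2 : \bar R := (\int[dl]_l (Num.min (mut1 l) (mut3 l))%:E - (alpha + beta)%:E)%E.
Definition T3 : \bar R := (\int[dl]_l (Num.min (mut2 l) (mut3 l))%:E - (alpha + beta)%:E)%E.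
Definition T4 : \bar R :=
  (\int[dl]_l (Num.min (mut1 l) (Num.min (mut2 l) (mut3 l)))%:E)%E.

Definition omega_Lam : \bar R := (T1 + T2 + T3 - T4)%E.
End Gamble.
End Defs.

From HB Require Import structures.
From mathcomp Require Import all_boot all_order all_algebra.
From mathcomp Require Import complex.
From mathcomp Require Import all_classical all_reals all_analysis.
From mathcomp Require Import ring lra measurable_realfun.
Set Implicit Arguments. Unset Strict Implicit. Unset Printing Implicit Defensive.
Import Order.TTheory GRing.Theory Num.Theory.
Import ComplexField.
Local Open Scope ring_scope.
Local Open Scope classical_set_scope.

(* Because the response functions sum to one and each density integrates to
   one, the payoff of a three-outcome measurement equals
   ½ ∫ (μ̃₁ ξ₁ + μ̃₂ ξ₂ + μ̃₃ ξ₃) - β, and a convex combination is at most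
   max (μ̃₁, μ̃₂, μ̃₃); this bounds S_Q by S_Λ.  The formula for S_Λ is the
   integrated inclusion-exclusion identity
   max(a,b,c) + min(a,b) + min(a,c) + min(b,c) = a + b + c + min(a,b,c),
   together with ∫ μ̃₁ = ∫ μ̃₂ = 1 + β and ∫ μ̃₃ = 2 (α + β). *)

Lemma maxr3_inclusion_exclusion (R : realDomainType) (a b c : R) :
  Num.max a (Num.max b c) + Num.min a b + Num.min a c + Num.min b c
  = a + b + c + Num.min a (Num.min b c).
Proof.
rewrite !maxEle !minEle.
by case: (leP b c) => ?; repeat (case: leP => ?); lra.
Qed.

Lemma convex_comb3_le_maxr (R : realDomainType) (a b c x y z : R) :
  0 <= x -> 0 <= y -> 0 <= z -> x + y + z = 1 ->
  a * x + b * y + c * z <= Num.max a (Num.max b c).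
Proof.
set m := Num.max a _ => x0 y0 z0 xyz1.
have am : a <= m by rewrite le_max lexx.
have bm : b <= m by rewrite !le_max lexx orbT.
have cm : c <= m by rewrite !le_max lexx !orbT.
rewrite -[leRHS]mulr1 -xyz1 !mulrDr.
by rewrite !lerD // ler_wpM2r.
Qed.

(* [sup] of an empty set is [0], hence the hypothesis [0 <= b]. *)
Lemma sup_le_ge0 (R : realType) (A : set R) (b : R) :
  0 <= b -> ubound A b -> sup A <= b.
Proof.
move=> b0 Ab; have [A0|A0] := pselect (A !=set0); first exact: ge_sup.
by rewrite sup_out // => -[].
Qed.

Section integrable_real.
Context d (T : measurableType d) (R : realType) (mu : {measure set T -> \bar R}).
Local Notation integrable f := (mu.-integrable setT (EFin \o f)).
Implicit Types f g : T -> R.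

Lemma integrableD_real f g : integrable f -> integrable g ->
  integrable (fun x => f x + g x).
Proof. by move=> fi gi; apply: eq_integrable (integrableD _ fi gi) => // x _. Qed.

Lemma integrableZl_real (k : R) f : integrable f -> integrable (fun x => k * f x).
Proof. by move=> fi; apply: eq_integrable (integrableZl _ k fi) => // x _. Qed.

Lemma le_integrable_real f g : measurable_fun setT f ->
  (forall x, `|f x| <= g x) -> integrable g -> integrable f.
Proof.
move=> mf fg gi; apply: le_integrable gi => //; first exact/measurable_EFinP.
by move=> x _ /=; rewrite lee_fin (le_trans (fg x)) // ler_norm.
Qed.

Lemma measurable_int_real f : integrable f -> measurable_fun setT f.
Proof. by move/measurable_int/measurable_EFinP. Qed.

Lemma ge0_integrable f : measurable_fun setT f -> (forall x, 0 <= f x) ->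
  (\int[mu]_x (f x)%:E < +oo)%E -> integrable f.
Proof.
move=> mf f0 fint; apply/integrableP; split; first exact/measurable_EFinP.
by under eq_integral => x _ do rewrite /= ger0_norm //.
Qed.

Lemma integrable_maxr f g : integrable f -> integrable g ->
  integrable (fun x => Num.max (f x) (g x)).
Proof.
move=> fi gi; apply: (le_integrable_real _ _
  (integrableD_real (integrable_norm fi) (integrable_norm gi))).
  by apply: measurable_maxr; exact: measurable_int_real.
by move=> x /=; rewrite maxEle; case: ifP => _; [rewrite lerDr | rewrite lerDl].
Qed.

Lemma integrable_minr f g : integrable f -> integrable g ->
  integrable (fun x => Num.min (f x) (g x)).
Proof.
move=> fi gi; apply: (le_integrable_real _ _
  (integrableD_real (integrable_norm fi) (integrable_norm gi))).
  by apply: measurable_minr; exact: measurable_int_real.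
by move=> x /=; rewrite minEle; case: ifP => _; [rewrite lerDl | rewrite lerDr].
Qed.

Lemma EFin_Rintegral f : integrable f ->
  (\int[mu]_x f x)%:E = (\int[mu]_x (f x)%:E)%E.
Proof. by move=> fi; rewrite /Rintegral fineK // (integrable_fin_num _ fi). Qed.

End integrable_real.

Section gambling.
Context d (L : measurableType d) (R : realType) (dl : {measure set L -> \bar R}).
Variables (mu1 mu2 : L -> R) (alpha beta : R).
Hypotheses (alpha_ge0 : 0 <= alpha) (beta_ge0 : 0 <= beta).
Hypotheses (mu1_meas : measurable_fun setT mu1) (mu2_meas : measurable_fun setT mu2).
Hypotheses (mu1_ge0 : forall l, 0 <= mu1 l) (mu2_ge0 : forall l, 0 <= mu2 l).
Hypotheses (mu1_norm : (\int[dl]_l (mu1 l)%:E = 1)%E)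
           (mu2_norm : (\int[dl]_l (mu2 l)%:E = 1)%E).

Local Notation integrable f := (dl.-integrable setT (EFin \o f)).
Local Notation f1 := (mut1 mu1 beta).
Local Notation f2 := (mut2 mu2 beta).
Local Notation f3 := (mut3 mu1 mu2 alpha beta).
Local Notation fmax := (fun l => Num.max (f1 l) (Num.max (f2 l) (f3 l))).

Let mu1_int : integrable mu1.
Proof. by apply: ge0_integrable => //; rewrite mu1_norm ltry. Qed.

Let mu2_int : integrable mu2.
Proof. by apply: ge0_integrable => //; rewrite mu2_norm ltry. Qed.

Let Rintegral_mu1 : \int[dl]_l mu1 l = 1.
Proof. by rewrite /Rintegral mu1_norm. Qed.

Let Rintegral_mu2 : \int[dl]_l mu2 l = 1.
Proof. by rewrite /Rintegral mu2_norm. Qed.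

Let f1_int : integrable f1. Proof. exact: integrableZl_real. Qed.
Let f2_int : integrable f2. Proof. exact: integrableZl_real. Qed.
Let f3_int : integrable f3.
Proof. exact/integrableZl_real/integrableD_real. Qed.

Let fmax_int : integrable fmax.
Proof. by apply: integrable_maxr => //; exact: integrable_maxr. Qed.

Let Rintegral_f1 : \int[dl]_l f1 l = 1 + beta.
Proof. by rewrite RintegralZl // Rintegral_mu1 mulr1. Qed.

Let Rintegral_f2 : \int[dl]_l f2 l = 1 + beta.
Proof. by rewrite RintegralZl // Rintegral_mu2 mulr1. Qed.

Let Rintegral_f3 : \int[dl]_l f3 l = (alpha + beta) * 2.
Proof.
rewrite RintegralZl ?RintegralD ?Rintegral_mu1 ?Rintegral_mu2 //.
exact: integrableD_real.
Qed.

Lemma S_LamE : S_Lam dl mu1 mu2 alpha beta = (2^-1 * \int[dl]_l fmax l - beta)%:E.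
Proof. by rewrite /S_Lam -EFin_Rintegral. Qed.

Lemma S_Lam_omega_Lam :
  S_Lam dl mu1 mu2 alpha beta = (1 - (2^-1)%:E * omega_Lam dl mu1 mu2 alpha beta)%E.
Proof.
pose m12 l := Num.min (f1 l) (f2 l).
pose m13 l := Num.min (f1 l) (f3 l).
pose m23 l := Num.min (f2 l) (f3 l).
pose m123 l := Num.min (f1 l) (Num.min (f2 l) (f3 l)).
have m12_int : integrable m12 by exact: integrable_minr.
have m13_int : integrable m13 by exact: integrable_minr.
have m23_int : integrable m23 by exact: integrable_minr.
have m123_int : integrable m123.
  by apply: integrable_minr => //; exact: integrable_minr.
have : \int[dl]_l (fmax l + m12 l + m13 l + m23 l)
       = \int[dl]_l (f1 l + f2 l + f3 l + m123 l).
  by apply: eq_Rintegral => l _; exact: maxr3_inclusion_exclusion.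
rewrite !RintegralD //; do ?apply: integrableD_real => //.
rewrite Rintegral_f1 Rintegral_f2 Rintegral_f3 => Efmax.
rewrite S_LamE /omega_Lam /T1 /T2 /T3 /T4.
rewrite -(EFin_Rintegral m12_int) -(EFin_Rintegral m13_int).
rewrite -(EFin_Rintegral m23_int) -(EFin_Rintegral m123_int).
by rewrite -!EFinB; congr EFin; lra.
Qed.

Lemma S_Lam_ge0 : beta <= 1 -> 0 <= 2^-1 * \int[dl]_l fmax l - beta.
Proof.
move=> beta_le1; have : 1 + beta <= \int[dl]_l fmax l.
  by rewrite -Rintegral_f1; apply: le_Rintegral => // l _; rewrite le_max lexx.
lra.
Qed.

Lemma gambling_payoff_le (xi : 'I_3 -> L -> R) (p1 p2 : 'I_3 -> R) :
  (forall i, measurable_fun setT (xi i)) -> (forall i l, 0 <= xi i l) ->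
  (forall l, \sum_(i < 3) xi i l = 1) ->
  (forall i, (p1 i)%:E = \int[dl]_l (mu1 l * xi i l)%:E)%E ->
  (forall i, (p2 i)%:E = \int[dl]_l (mu2 l * xi i l)%:E)%E ->
  2^-1 * (p1 0 - beta * p1 1 + alpha * p1 2 + p2 1 - beta * p2 0 + alpha * p2 2)
    <= 2^-1 * \int[dl]_l fmax l - beta.
Proof.
move=> xi_meas xi_ge0 xi_sum p1E p2E.
have xi_le1 i l : xi i l <= 1.
  rewrite -(xi_sum l) (bigD1 i) //= lerDl.
  by apply: sumr_ge0 => j _; exact: xi_ge0.
have mu_xi_int (mu : L -> R) i : measurable_fun setT mu -> (forall l, 0 <= mu l) ->
    integrable mu -> integrable (fun l => mu l * xi i l).
  move=> mu_meas mu_ge0; apply: le_integrable_real => [|l].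
    exact: measurable_funM.
  by rewrite normrM !ger0_norm // ler_piMr.
have mu1_xi_int i := mu_xi_int mu1 i mu1_meas mu1_ge0 mu1_int.
have mu2_xi_int i := mu_xi_int mu2 i mu2_meas mu2_ge0 mu2_int.
have {}p1E i : p1 i = \int[dl]_l (mu1 l * xi i l).
  by apply/eqP; rewrite -eqe EFin_Rintegral // p1E.
have {}p2E i : p2 i = \int[dl]_l (mu2 l * xi i l).
  by apply/eqP; rewrite -eqe EFin_Rintegral // p2E.
(* Every term is a sum of scalings, so [RintegralD] and [RintegralZl] alone
   split the integrals below. *)
pose payoff l := mu1 l * xi 0 l + - beta * (mu1 l * xi 1 l)
  + alpha * (mu1 l * xi 2 l) + mu2 l * xi 1 l + - beta * (mu2 l * xi 0 l)
  + alpha * (mu2 l * xi 2 l).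
pose bound l := fmax l + - beta * mu1 l + - beta * mu2 l.
have payoff_le l : payoff l <= bound l.
  have xi3 : xi 0 l + xi 1 l + xi 2 l = 1.
    rewrite -(xi_sum l) !big_ord_recl big_ord0 addr0 addrA.
    by congr (xi _ l + xi _ l + xi _ l); apply: val_inj.
  have -> : payoff l = f1 l * xi 0 l + f2 l * xi 1 l + f3 l * xi 2 l
      + - beta * mu1 l * (xi 0 l + xi 1 l + xi 2 l)
      + - beta * mu2 l * (xi 0 l + xi 1 l + xi 2 l).
    by rewrite /payoff /mut1 /mut2 /mut3; ring.
  rewrite xi3 !mulr1 !lerD2r.
  exact: convex_comb3_le_maxr.
have payoff_int : integrable payoff.
  by do ?[apply: integrableD_real | apply: integrableZl_real].
have bound_int : integrable bound.
  by do ?[apply: integrableD_real | apply: integrableZl_real].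
have := le_Rintegral measurableT payoff_int bound_int (fun l _ => payoff_le l).
rewrite /payoff /bound !RintegralD ?RintegralZl -?p1E -?p2E //;
  do ?[apply: integrableD_real | apply: integrableZl_real] => //.
rewrite Rintegral_mu1 Rintegral_mu2.
lra.
Qed.

End gambling.

Theorem theorem1 (R : realType) (n : nat) (psi1 psi2 : 'cV[R[i]]_n)
  (alpha beta : R)
  (d : measure_display) (L : measurableType d) (dl : {measure set L -> \bar R})
  (mu1 mu2 : L -> R)
  (xi : forall k, ('I_k -> 'M[R[i]]_n) -> 'I_k -> L -> R) :
  unit_vector psi1 -> unit_vector psi2 ->
  0 <= alpha <= 1 -> 0 <= beta <= 1 ->
  ontological_model psi1 psi2 dl mu1 mu2 xi ->
  ((S_Q psi1 psi2 alpha beta)%:E <= S_Lam dl mu1 mu2 alpha beta)%E /\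
  S_Lam dl mu1 mu2 alpha beta = (1 - (2^-1)%:E * omega_Lam dl mu1 mu2 alpha beta)%E.
Proof.
move=> _ _ /andP[alpha_ge0 _] /andP[beta_ge0 beta_le1].
move=> [[mu1_meas mu2_meas] [mu1_ge0 mu2_ge0] [mu1_norm mu2_norm] response].
split; last exact: S_Lam_omega_Lam.
rewrite S_LamE // lee_fin.
apply: sup_le_ge0; first exact: S_Lam_ge0.
move=> _ [M [/response[xi_meas xi_ge0 xi_sum p1E p2E] ->]].
exact: gambling_payoff_le.
Qed.
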